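(* Let $X$ be a real Hilbert space, $T:X\to X$, $C\subseteq X$ nonempty and $\varphi:[0,\infty)\to[0,\infty)$ an increasing function vanishing only at $0$. If $T$ is uniformly $(P_2)$ on $C$ with modulus $\varphi$, then $T$ is uniformly firmly nonexpansive on $C$ with modulus $\varphi$.
   Context: $T$ is uniformly firmly nonexpansive on $C$ with modulus $\varphi$ if $T(C)\subseteq C$ and for all $x,y\in C$, $t\in[0,1]$: $\|Tx-Ty\|^2\le\|((1-t)x+tTx)-((1-t)y+tTy)\|^2-2(1-t)\varphi(\|Tx-Ty\|)$. $T$ is uniformly $(P_2)$ on $C$ with modulus $\varphi$ if $T(C)\subseteq C$ and for all $x,y\in C$: $2\|Tx-Ty\|^2\le\|x-Ty\|^2+\|y-Tx\|^2-\|x-Tx\|^2-\|y-Ty\|^2-2\varphi(\|Tx-Ty\|)$. *)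

From mathcomp Require Import all_boot all_order all_algebra.
From mathcomp Require Import all_classical all_reals all_analysis.
Import Order.TTheory GRing.Theory Num.Theory.
Import numFieldNormedType.Exports.
Local Open Scope ring_scope.
Local Open Scope classical_set_scope.

(* A real Hilbert space: a complete normed space over R whose norm comes
   from a symmetric, bilinear, positive definite inner product. *)
Definition is_inner_product {R : realType} {X : normedModType R}
  (ip : X -> X -> R) : Prop :=
  (forall x y, ip x y = ip y x) /\
  (forall x y z, ip (x + y) z = ip x z + ip y z) /\
  (forall (a : R) x y, ip (a *: x) y = a * ip x y) /\
  (forall x, 0 <= ip x x) /\
  (forall x, ip x x = 0 -> x = 0) /\
  (forall x, `|x| = Num.sqrt (ip x x)).

Definition unif_firmly_nonexpansive {R : realType} {X : normedModType R}
  (T : X -> X) (C : set X) (phi : R -> R) : Prop :=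
  (T @` C `<=` C) /\
  forall x y, C x -> C y -> forall t : R, 0 <= t <= 1 ->
    `|T x - T y| ^+ 2 <=
      `|((1 - t) *: x + t *: T x) - ((1 - t) *: y + t *: T y)| ^+ 2
      - 2 * (1 - t) * phi `|T x - T y|.

Definition unif_P2 {R : realType} {X : normedModType R}
  (T : X -> X) (C : set X) (phi : R -> R) : Prop :=
  (T @` C `<=` C) /\
  forall x y, C x -> C y ->
    2 * `|T x - T y| ^+ 2 <=
      `|x - T y| ^+ 2 + `|y - T x| ^+ 2 - `|x - T x| ^+ 2 - `|y - T y| ^+ 2
      - 2 * phi `|T x - T y|.

(* Put a := x - y and b := T x - T y.  By polarization, the (P_2) inequality
   at x, y says exactly |b|^2 <= <a, b> - phi |b|.  Expanding the square, the
   firmly nonexpansive inequality at x, y, t says that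
   (1 - t) ((1 - t) |a - b|^2 + 2 (<a, b> - phi |b| - |b|^2)) is nonnegative.
   No property of phi or of C beyond T-invariance is used. *)
From mathcomp Require Import all_boot all_order all_algebra.
From mathcomp Require Import all_classical all_reals all_analysis.
From mathcomp Require Import lra.
Import Order.TTheory GRing.Theory Num.Theory.
Import numFieldNormedType.Exports.
Local Open Scope ring_scope.
Local Open Scope classical_set_scope.

Lemma convex_combB (R : pzRingType) (V : lmodType R) (t : R) (x y u v : V) :
  ((1 - t) *: x + t *: u) - ((1 - t) *: y + t *: v)
  = (1 - t) *: (x - y) + t *: (u - v).
Proof. by rewrite opprD addrACA -!scalerBr. Qed.

Section InnerProduct.
Context {R : realType} {X : normedModType R} {ip : X -> X -> R}.
Hypothesis hip : is_inner_product ip.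

Lemma ipC x y : ip x y = ip y x.
Proof. by case: hip. Qed.

Lemma ipDl x y z : ip (x + y) z = ip x z + ip y z.
Proof. by case: hip => _ []. Qed.

Lemma ipZl a x y : ip (a *: x) y = a * ip x y.
Proof. by case: hip => _ [_ []]. Qed.

Lemma ipDr x y z : ip x (y + z) = ip x y + ip x z.
Proof. by rewrite ipC ipDl !(ipC x). Qed.

Lemma ipZr a x y : ip x (a *: y) = a * ip x y.
Proof. by rewrite ipC ipZl ipC. Qed.

Lemma ipBl x y z : ip (x - y) z = ip x z - ip y z.
Proof. by rewrite ipDl -scaleN1r ipZl mulN1r. Qed.

Lemma ipBr x y z : ip x (y - z) = ip x y - ip x z.
Proof. by rewrite ipC ipBl !(ipC x). Qed.

Lemma sqr_normE x : `|x| ^+ 2 = ip x x.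
Proof. by case: hip => _ [_ [_ [ip_ge0 [_ ->]]]]; rewrite sqr_sqrtr. Qed.

Lemma sqr_normD x y : `|x + y| ^+ 2 = `|x| ^+ 2 + 2 * ip x y + `|y| ^+ 2.
Proof. by rewrite !sqr_normE ipDl !ipDr (ipC y x); lra. Qed.

Lemma sqr_normB x y : `|x - y| ^+ 2 = `|x| ^+ 2 - 2 * ip x y + `|y| ^+ 2.
Proof. by rewrite !sqr_normE ipBl !ipBr (ipC y x); lra. Qed.

Lemma polarization x y u v :
  `|x - v| ^+ 2 + `|y - u| ^+ 2 - `|x - u| ^+ 2 - `|y - v| ^+ 2
  = 2 * ip (x - y) (u - v).
Proof. by rewrite !sqr_normB ipBl !ipBr; lra. Qed.

Lemma sqr_norm_convex_le a b (c t : R) : 0 <= t <= 1 ->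
  `|b| ^+ 2 <= ip a b - c ->
  `|b| ^+ 2 <= `|(1 - t) *: a + t *: b| ^+ 2 - 2 * (1 - t) * c.
Proof.
move=> /andP[t_ge0 t_le1] hb.
have dist_ge0 : 0 <= `|a| ^+ 2 - 2 * ip a b + `|b| ^+ 2.
  by rewrite -sqr_normB sqr_ge0.
rewrite sqr_normD ipZl ipZr !sqr_normE !ipZl !ipZr -!sqr_normE.
have := mulr_ge0 (sqr_ge0 (1 - t)) dist_ge0.
have : 0 <= (1 - t) * (ip a b - c - `|b| ^+ 2).
  by apply: mulr_ge0; lra.
nra.
Qed.

End InnerProduct.

Theorem proposition4p3 (R : realType) (X : completeNormedModType R)
  (ip : X -> X -> R) (hip : is_inner_product ip)
  (T : X -> X) (C : set X) (hC : C !=set0) (phi : R -> R)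
  (phi_ge0 : forall s, 0 <= s -> 0 <= phi s)
  (phi_incr : forall s u, 0 <= s -> s <= u -> phi s <= phi u)
  (phi_zero : forall s, 0 <= s -> (phi s = 0 <-> s = 0)) :
  unif_P2 T C phi -> unif_firmly_nonexpansive T C phi.
Proof.
move=> [TC P2]; split=> // x y Cx Cy t t01.
rewrite convex_combB; apply: (sqr_norm_convex_le hip) => //.
by have := P2 x y Cx Cy; rewrite (polarization hip); lra.
Qed.
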